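(* Let $\pi=(\pi_n^{n+1}\colon(X_{n+1},f_{n+1})\to(X_n,f_n))_{n\ge1}$ be an inverse sequence of equivariant maps satisfying MLC(1), and suppose $(X_n,f_n)$ is a transitive subshift of finite type for each $n\ge1$. Then there is $D_\ast=(D_n)_{n\ge1}\in\mathcal{D}_\pi$ such that the inverse sequence $\tilde\pi=(\pi_n^{n+1}|_{D_{n+1}}\colon D_{n+1}\to D_n)_{n\ge1}$ satisfies MLC(1).
   Context: Equivariant means $\pi_n^{n+1}$ continuous with $f_n\circ\pi_n^{n+1}=\pi_n^{n+1}\circ f_{n+1}$; $\pi_n^m=\pi_n^{n+1}\circ\cdots\circ\pi_{m-1}^m$. An inverse sequence $(p_n\colon Z_{n+1}\to Z_n)$ satisfies MLC(1) if $p_n(Z_{n+1})=p_n(p_{n+1}(Z_{n+2}))$ for all $n$. A subshift of finite type is $(Z,\sigma|_Z)$ with $S$ a finite discrete set, $\sigma$ the shift $(x_i)_{i\ge1}\mapsto(x_{i+1})_{i\ge1}$ on $S^{\mathbb N}$, and $Z=\{x:(x_i,\dots,x_{i+N})\in F\ \forall i\}$ for some $N>0$, $F\subset S^{N+1}$; it is transitive if for all nonempty open $U,V\subset Z$ there is $k>0$ with $\sigma^k(U)\cap V\ne\emptyset$. For a chain transitive continuous map $g$ of a compact metric space $(Y,d)$ (every transitive SFT is such): a $\delta$-chain is $(y_i)_{i=0}^k$, $k>0$, with $d(g(y_i),y_{i+1})\le\delta$, a $\delta$-cycle of length $k$ if $y_0=y_k$; $m(g,\delta)$ is the gcd of lengths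 of $\delta$-cycles; $y\sim_{g,\delta}z$ iff there is a $\delta$-chain from $y$ to $z$ of length divisible by $m(g,\delta)$; $y\sim_g z$ iff $y\sim_{g,\delta}z$ for all $\delta>0$; $\mathcal{D}(g)$ is the set of equivalence classes of $\sim_g$. Finally $\mathcal{D}_\pi=\{(D_n)_{n\ge1}\in\prod_n\mathcal{D}(f_n):\pi_n^{n+1}(D_{n+1})\subset D_n\ \forall n\}$. *)

From mathcomp Require Import all_boot.
Set Implicit Arguments. Unset Strict Implicit. Unset Printing Implicit Defensive.

Definition pset (T : Type) := T -> Prop.
Definition same_set (T : Type) (P Q : pset T) := forall x, P x <-> Q x.
Definition img (A B : Type) (f : A -> B) (P : pset A) : pset B :=
  fun y => exists x, P x /\ f x = y.

(* The full shift on S^N (indices start at 0 instead of 1). *)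
Definition shift (S : Type) (x : nat -> S) : nat -> S := fun i => x i.+1.

(* agree k x y  <->  d(x,y) <= 2^-k  for the standard metric
   d(x,y) = 2^-(min {i | x i <> y i}) (d(x,x)=0) on S^N. *)
Definition agree (S : Type) (k : nat) (x y : nat -> S) :=
  forall i, i < k -> x i = y i.

Definition window (S : Type) (N : nat) (x : nat -> S) (i : nat) : N.+1.-tuple S :=
  [tuple x (i + j) | j < N.+1].

Definition is_SFT (S : finType) (Z : pset (nat -> S)) :=
  exists N, 0 < N /\ exists F : {set N.+1.-tuple S},
    forall x, Z x <-> (forall i, window N x i \in F).

(* U is an open subset of Z (relative product topology = metric topology). *)
Definition rel_open (S : Type) (Z U : pset (nat -> S)) :=
  (forall x, U x -> Z x) /\
  (forall x, U x -> exists k, forall y, Z y -> agree k x y -> U y).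

Definition transitive_shift (S : Type) (Z : pset (nat -> S)) :=
  forall U V, rel_open Z U -> rel_open Z V -> (exists x, U x) -> (exists x, V x) ->
    exists k, 0 < k /\ exists x, U x /\ V (iter k (@shift S) x).

Definition is_transitive_SFT (S : finType) (Z : pset (nat -> S)) :=
  is_SFT Z /\ transitive_shift Z.

Definition cont_on (S S' : Type) (X : pset (nat -> S)) (f : (nat -> S) -> (nat -> S')) :=
  forall x, X x -> forall k, exists l, forall y, X y -> agree l x y -> agree k (f x) (f y).

(* Chains for g = shift|_Y with precision delta = 2^-d (d : nat).
   c 0, ..., c k is a delta-chain of length k. *)
Definition is_chain (S : Type) (Y : pset (nat -> S)) (d k : nat) (c : nat -> nat -> S) :=
  0 < k /\ (forall i, i <= k -> Y (c i)) /\
  (forall i, i < k -> agree d (shift (c i)) (c i.+1)).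

Definition is_cycle (S : Type) (Y : pset (nat -> S)) (d k : nat) (c : nat -> nat -> S) :=
  is_chain Y d k c /\ c 0 = c k.

(* m = m(g, delta): gcd of the lengths of delta-cycles (0 if there are none) *)
Definition is_cycle_gcd (S : Type) (Y : pset (nat -> S)) (d m : nat) :=
  (forall k c, is_cycle Y d k c -> m %| k) /\
  (forall e, (forall k c, is_cycle Y d k c -> e %| k) -> e %| m).

Definition chain_rel_d (S : Type) (Y : pset (nat -> S)) (d : nat) (y z : nat -> S) :=
  exists m, is_cycle_gcd Y d m /\
    exists k c, is_chain Y d k c /\ c 0 = y /\ c k = z /\ m %| k.

Definition chain_rel (S : Type) (Y : pset (nat -> S)) (y z : nat -> S) :=
  forall d, chain_rel_d Y d y z.

Definition is_D_class (S : Type) (Y : pset (nat -> S)) (D : pset (nat -> S)) :=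
  exists y, Y y /\ forall z, D z <-> (Y z /\ chain_rel Y y z).

Definition MLC1 (T : nat -> Type) (Z : forall n, pset (T n))
  (p : forall n, T n.+1 -> T n) :=
  forall n, same_set (img (p n) (Z n.+1)) (img (p n) (img (p n.+1) (Z n.+2))).

(* By MLC(1) there is a thread (t_n), t_n = π(t_{n+1}), with t_n in
   π(X_{n+1}); let D_n be the chain class of t_n.  Equivariant continuous maps send
   chain classes into chain classes, so (D_n) lies in D_π, and what remains is to lift
   z in D_{n+1} to w in D_{n+2} with π(π w) = π z.  The shift permutes the chain
   classes of a transitive SFT cyclically with a period M, and a δ-chain can visit
   finitely many points of one class at times divisible by M.  Shadowing such a chain
   by an orbit and lifting the orbit by MLC(1) shows, by compactness, that for some j
   the image of the class of σ^j t_{n+2} covers π(D_{n+1}).  Shifting this inclusion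
   by multiples of j and going once around the cycle of classes returns to the class
   of t_{n+2}. *)

From mathcomp Require Import all_boot zify.
From Stdlib Require Import FunctionalExtensionality ClassicalEpsilon.
Set Implicit Arguments. Unset Strict Implicit. Unset Printing Implicit Defensive.

Lemma classical_ex_minn (P : nat -> Prop) :
  (exists n, P n) -> exists n, P n /\ forall m, P m -> n <= m.
Proof.
case=> n; elim/ltn_ind: n => n IH Pn.
case: (classic (exists2 m, P m & m < n)) => [[m Pm Hm] | H]; first exact: IH Pm.
by exists n; split=> // m Pm; rewrite leqNgt; apply/negP => Hm; apply: H; exists m.
Qed.

(* [h] plays the role of the gcd of [P]: the least positive residue mod [M]
   of an element of [P]. *)
Lemma addn_closed_neg_residues (P : nat -> Prop) M : 0 < M -> P 0 ->
  (forall a b, P a -> P b -> P (a + b)) ->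
  exists2 h, (forall a, P a -> h %| a) & (forall n, h %| n -> exists2 b, P b & M %| b + n).
Proof.
move=> M0 P0 PD.
have PM n a : P a -> P (n * a).
  by elim: n => [|n IH] Pa; rewrite ?mulSn; [ | apply: PD; last apply: IH].
pose Q r := 0 < r /\ exists2 k, P k & k = r %[mod M].
have QM : Q M by split=> //; exists 0; rewrite ?modnn ?mod0n.
have [h [[h0 [kh Pkh Ekh]] hmin]] := classical_ex_minn (ex_intro Q M QM).
have sub a q : P a -> exists2 b, P b & b + q * h = a %[mod M].
  (* [M.-1 * q] copies of [kh] are [- q * h] mod [M]. *)
  move=> Pa; exists (a + M.-1 * q * kh); first by apply: PD => //; apply: PM.
  rewrite -modnDmr -modnMmr -Ekh modnMmr modnDmr.
  have -> : a + M.-1 * q * kh + q * kh = q * kh * M + a.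
    by rewrite -{2}(prednK M0) mulnS; lia.
  by rewrite modnMDl.
have res_dvd a x : P a -> x = a %[mod M] -> h %| x.
  move=> Pa Ex; have [b Pb Eb] := sub a (x %/ h) Pa.
  have : b + x %/ h * h = x %% h + x %/ h * h %[mod M] by rewrite Eb addnC -divn_eq Ex.
  move/eqP; rewrite eqn_modDr => /eqP Eres.
  case: (posnP (x %% h)) => [/eqP // | Hpos].
  by have := hmin _ (conj Hpos (ex_intro2 _ _ b Pb Eres)); rewrite leqNgt ltn_pmod.
exists h => [a Pa | n /dvdnP [q ->]]; first exact: res_dvd Pa erefl.
by have [b Pb Eb] := sub 0 q P0; exists b; rewrite // /dvdn Eb mod0n.
Qed.

Lemma antitone_fin_index M (Q : nat -> nat -> Prop) :
  (forall j d d', d <= d' -> Q j d' -> Q j d) ->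
  (forall d, exists2 j, j < M & Q j d) -> exists2 j, j < M & forall d, Q j d.
Proof.
move=> Qanti; elim: M => [|M IH] H; first by have [j] := H 0.
case: (classic (forall d, Q M d)) => [QM | /not_all_ex_not [d0 Hd0]]; first by exists M.
have [j Hj Qj] : exists2 j, j < M & forall d, Q j d.
  apply: IH => d; have [j Hj Qj] := H (maxn d d0).
  case: (j =P M) => Ej.
    by case: Hd0; rewrite -Ej; apply: Qanti Qj; apply: leq_maxr.
  by exists j; [lia | apply: Qanti Qj; apply: leq_maxl].
by exists j => //; lia.
Qed.

(** * Sequences, chains and subshifts of finite type *)

Notation shiftn k := (iter k (@shift _)).

Section Sequences.
Variable S : Type.
Implicit Types x y z : nat -> S.

Lemma agree_sym k x y : agree k x y -> agree k y x.
Proof. by move=> H i Hi; rewrite H. Qed.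

Lemma agree_trans k x y z : agree k x y -> agree k y z -> agree k x z.
Proof. by move=> H1 H2 i Hi; rewrite H1 // H2. Qed.

Lemma agree_le k k' x y : k <= k' -> agree k' x y -> agree k x y.
Proof. by move=> Hk H i Hi; apply: H; lia. Qed.

Lemma agree_shift k x y : agree k.+1 x y -> agree k (shift x) (shift y).
Proof. by move=> H i Hi; apply: H. Qed.

Lemma shiftnE k x : shiftn k x = fun i => x (i + k).
Proof.
elim: k => [|k IH] /=; first by apply: functional_extensionality => i; rewrite addn0.
by rewrite IH; apply: functional_extensionality => i; rewrite /shift addnS.
Qed.

Lemma shift_shiftn k x : shift (shiftn k x) = shiftn k (shift x).
Proof. by rewrite -iterSr. Qed.

Lemma window_eq N x y i i' : (forall j, j <= N -> x (i + j) = y (i' + j)) ->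
  window N x i = window N y i'.
Proof. by move=> H; apply: eq_mktuple => j; apply: H; rewrite -ltnS. Qed.

End Sequences.

Lemma equivariant_shiftn (S T : Type) (Y : pset (nat -> S)) (f : (nat -> S) -> (nat -> T)) :
  (forall x, Y x -> Y (shift x)) -> (forall x, Y x -> f (shift x) = shift (f x)) ->
  forall t x, Y x -> f (shiftn t x) = shiftn t (f x).
Proof.
move=> Yshift feq t x Yx; suff : Y (shiftn t x) /\ f (shiftn t x) = shiftn t (f x) by case.
by elim: t => [|t [Yt Ht]] //=; rewrite feq // Ht; split=> //; apply: Yshift.
Qed.

Definition cat_chain (S : Type) (c1 : nat -> nat -> S) k1 (c2 : nat -> nat -> S) :=
  fun i => if i <= k1 then c1 i else c2 (i - k1).

Definition orbit (S : Type) (y : nat -> S) := fun i => shiftn i y.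

Section Chains.
Variables (S : Type) (Y : pset (nat -> S)).
Implicit Types c : nat -> nat -> S.

Lemma is_chain_le d d' k c : d <= d' -> is_chain Y d' k c -> is_chain Y d k c.
Proof. by move=> Hd [H1 [H2 H3]]; split=> //; split=> // i Hi; apply: agree_le Hd (H3 i Hi). Qed.

Lemma is_cycle_le d d' k c : d <= d' -> is_cycle Y d' k c -> is_cycle Y d k c.
Proof. by move=> Hd [H1 H2]; split=> //; apply: is_chain_le H1. Qed.

Lemma cat_chain0 k1 c1 c2 : cat_chain c1 k1 c2 0 = c1 0.
Proof. by []. Qed.

Lemma cat_chain_end k1 c1 k2 c2 : 0 < k2 -> cat_chain c1 k1 c2 (k1 + k2) = c2 k2.
Proof. by move=> Hk; rewrite /cat_chain ifF ?addKn //; lia. Qed.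

Lemma is_chain_cat d k1 c1 k2 c2 : is_chain Y d k1 c1 -> is_chain Y d k2 c2 ->
  c1 k1 = c2 0 -> is_chain Y d (k1 + k2) (cat_chain c1 k1 c2).
Proof.
move=> [P1 [Y1 A1]] [P2 [Y2 A2]] E; split; first lia.
split=> i Hi; rewrite /cat_chain.
  by case: ifP => Hik; [apply: Y1 | apply: Y2; lia].
case: (ltngtP i k1) => Hik.
- exact: A1.
- by rewrite subSn ?(ltnW Hik) //; apply: A2; lia.
- by rewrite Hik subSnn E; apply: A2.
Qed.

Lemma is_cycle_cat d k1 c1 k2 c2 : is_cycle Y d k1 c1 -> is_cycle Y d k2 c2 ->
  c1 0 = c2 0 -> is_cycle Y d (k1 + k2) (cat_chain c1 k1 c2).
Proof.
move=> [H1 E1] [H2 E2] E; split; first by apply: is_chain_cat; rewrite // -E1 E.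
by rewrite cat_chain0 cat_chain_end ?E -?E2 //; case: H2.
Qed.

Lemma is_chain_diag d k c : is_chain Y d k c ->
  forall j i s, i + j <= k -> j + s <= d -> c (i + j) s = c i (j + s).
Proof.
move=> [_ [_ A]]; elim=> [|j IH] i s H1 H2; first by rewrite addn0.
rewrite addnS -addSn IH; try lia.
by rewrite -(A i _ (j + s)) /shift ?addnS //; lia.
Qed.

End Chains.
Section SFT.
Variables (S : finType) (Y : pset (nat -> S)).
Hypothesis HY : is_SFT Y.

Lemma SFT_closed w : (forall l, exists2 x, Y x & agree l w x) -> Y w.
Proof.
case: HY => N [_ [F HF]] H; apply/HF => i.
have [x /HF Yx Ax] := H (i + N).+1.
by rewrite (@window_eq _ N w x i i) // => j Hj; apply: Ax; lia.
Qed.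

Lemma SFT_shift x : Y x -> Y (shift x).
Proof.
case: HY => N [_ [F HF]] /HF H; apply/HF => i.
by rewrite (@window_eq _ N _ x i i.+1).
Qed.

Lemma SFT_shiftn k x : Y x -> Y (shiftn k x).
Proof. by elim: k => //= k IH Yx; apply: SFT_shift; apply: IH. Qed.

Lemma orbit_chain d k y : 0 < k -> Y y -> is_chain Y d k (orbit y).
Proof. by move=> Hk Yy; split=> //; split=> // i _; apply: SFT_shiftn. Qed.

Lemma SFT_shadowing : exists N, forall d k c, N <= d -> is_chain Y d k c ->
  exists x, Y x /\ (forall i, i <= k -> agree d.+1 (shiftn i x) (c i)) /\
    shiftn k x = c k.
Proof.
case: HY => N [_ [F HF]]; exists N => d k c HNd Hc.
pose x i := if i < k then c i 0 else c k (i - k).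
have xc i j : i <= k -> j <= d -> x (i + j) = c i j.
  move=> Hi Hj; rewrite /x; case: ifP => H.
    by rewrite (is_chain_diag Hc (j := j) (i := i) (s := 0)) ?addn0 //; lia.
  have := is_chain_diag Hc (j := k - i) (i := i) (s := i + j - k).
  rewrite subnKC // => ->; try lia.
  by congr (c i); lia.
have [_ [Yc _]] := Hc.
exists x; split; last split.
- apply/HF => t; case: (ltnP t k) => Ht.
    rewrite (@window_eq _ N x (c t) t 0); first by move/HF: (Yc t (ltnW Ht)); apply.
    by move=> j Hj; rewrite xc //; lia.
  rewrite (@window_eq _ N x (c k) t (t - k)); first by move/HF: (Yc k (leqnn k)); apply.
  by move=> j Hj; rewrite /x ifF; [congr (c k) | ]; lia.
- by move=> i Hi j Hj; rewrite shiftnE addnC xc //; lia.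
- rewrite shiftnE; apply: functional_extensionality => j.
  by rewrite /x ifF; [congr (c k) | ]; lia.
Qed.

Lemma SFT_periodic_point : (exists x, Y x) -> exists P u, 0 < P /\ Y u /\ shiftn P u = u.
Proof.
case=> x Yx; case: HY => N [_ [F HF]].
pose g (k : 'I_#|{: N.+1.-tuple S}|.+1) := window N x k.
have [i0 [j0 Hij Eij]] : exists i0, exists2 j0, i0 != j0 & g i0 = g j0.
  apply/injectivePn; apply/negP => /injectiveP Hinj.
  by have := leq_card _ Hinj; rewrite card_ord ltnn.
wlog Hlt : i0 j0 Hij Eij / i0 < j0.
  move=> W; case: (ltngtP i0 j0) => H; first exact: W Hij Eij H.
    by apply: (W j0 i0); rewrite // eq_sym.
  by move: Hij; rewrite (val_inj H) eqxx.
set i := nat_of_ord i0 in Hlt Eij; set j := nat_of_ord j0 in Hlt Eij.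
have Exij a : a <= N -> x (i + a) = x (j + a).
  move=> Ha; have := congr1 (fun t => tnth t (inord a)) Eij.
  by rewrite /g /window !tnth_mktuple inordK.
pose P := j - i.
have HP : 0 < P by rewrite subn_gt0.
pose u t := x (i + t %% P).
have Hu b : b < P + N.+1 -> x (i + b %% P) = x (i + b).
  elim/ltn_ind: b => b IH Hb; case: (ltnP b P) => HbP; first by rewrite modn_small.
  rewrite -(subnK HbP) modnDr IH; try lia.
  by rewrite Exij; [congr x | ]; rewrite /P; lia.
exists P, u; split=> //; split.
  apply/HF => t; rewrite (@window_eq _ N u x t (i + t %% P)); first by move/HF: Yx; apply.
  move=> r Hr; rewrite /u -addnA -(Hu (t %% P + r)); last by have := ltn_pmod t HP; lia.
  by rewrite modnDml.
by rewrite shiftnE; apply: functional_extensionality => t; rewrite /u modnDr.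
Qed.

End SFT.

(** * Chain classes of a transitive subshift of finite type *)

Definition common_period (S : Type) (Y : pset (nat -> S)) M :=
  forall d m, is_cycle_gcd Y d m -> m %| M.

Section ChainClasses.
Variables (S : finType) (Y : pset (nat -> S)).
Hypothesis HY : is_transitive_SFT Y.
Hypothesis Hne : exists x, Y x.

Let YSFT : is_SFT Y := proj1 HY.

Lemma transitive_chain d y z : Y y -> Y z ->
  exists k c, is_chain Y d k c /\ c 0 = y /\ c k = z.
Proof.
move=> Yy Yz; pose U x := Y x /\ agree d.+1 y x; pose V x := Y x /\ agree d z x.
have open_ball k u : rel_open Y (fun x => Y x /\ agree k u x).
  by split=> [x [] // | x [Yx Ax]]; exists k => x' Yx' A'; split=> //; apply: agree_trans Ax A'.
have eU : exists x, U x by exists y.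
have eV : exists x, V x by exists z.
have [k [Hk [x [[Yx Ax] [Yk Ak]]]]] := proj2 HY U V (open_ball _ _) (open_ball _ _) eU eV.
pose c i := if i == 0 then y else if i == k then z else shiftn i x.
exists k, c; split; last by rewrite /c eqxx (negbTE (lt0n_neq0 Hk)) eqxx.
split=> //; split=> i Hi; rewrite /c.
  by case: ifP => // _; case: ifP => // _; apply: SFT_shiftn.
case: (i =P 0) => [-> | _] /=.
  case: (1 =P k) => [Ek | _]; last exact: agree_shift Ax.
  by apply: agree_trans (agree_shift Ax) _; apply: agree_sym; move: Ak; rewrite -Ek.
rewrite ifF; last by apply/eqP; lia.
case: (i.+1 =P k) => [Ek | _] //.
by apply: agree_sym; rewrite shift_shiftn -iterSr Ek.
Qed.

Lemma cycle_through d y : Y y -> exists k c, is_cycle Y d k c /\ c 0 = y.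
Proof.
move=> Yy; have [k [c [Hc [E0 Ek]]]] := transitive_chain d Yy Yy.
by exists k, c; do 2!split=> //; rewrite E0 Ek.
Qed.

(* The gcd is the least positive number divisible by every common divisor of the
   cycle lengths. *)
Lemma cycle_gcd_exists d : exists m, is_cycle_gcd Y d m.
Proof.
have [y Yy] := Hne; have [k0 [c0 [Hc0 _]]] := cycle_through d Yy.
pose Q g := 0 < g /\ forall e, (forall k c, is_cycle Y d k c -> e %| k) -> e %| g.
have Qk0 : Q k0 by split=> [|e He]; [case: Hc0 => [[]] | apply: He Hc0].
have [g [[g0 Hg] gmin]] := classical_ex_minn (ex_intro Q k0 Qk0).
exists g; split=> // k c Hc; apply/gcdn_idPl/eqP.
have Qgk : Q (gcdn g k).
  by split=> [|e He]; rewrite ?gcdn_gt0 ?g0 // dvdn_gcd Hg // (He _ _ Hc).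
by rewrite eqn_leq dvdn_leq ?dvdn_gcdl // gmin.
Qed.

Lemma cycle_gcd_unique d m m' : is_cycle_gcd Y d m -> is_cycle_gcd Y d m' -> m = m'.
Proof. by move=> [H1 H2] [H1' H2']; apply/eqP; rewrite eqn_dvd H2' // H2. Qed.

Lemma cycle_gcd_dvd d d' m m' : d <= d' ->
  is_cycle_gcd Y d m -> is_cycle_gcd Y d' m' -> m %| m'.
Proof. by move=> Hd [H1 _] [_ H2']; apply: H2' => k c Hc; apply: H1 (is_cycle_le Hd Hc). Qed.

Lemma chain_rel_dP d m y z : is_cycle_gcd Y d m -> chain_rel_d Y d y z ->
  exists k c, is_chain Y d k c /\ c 0 = y /\ c k = z /\ m %| k.
Proof. by move=> Hm [m' [Hm' H]]; rewrite (cycle_gcd_unique Hm Hm'). Qed.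

Lemma chain_rel_d_mem d y z : chain_rel_d Y d y z -> Y y /\ Y z.
Proof. by move=> [m [_ [k [c [[_ [Yc _]] [<- [<- _]]]]]]]; split; apply: Yc. Qed.

Lemma chain_rel_d_le d d' y z : d <= d' -> chain_rel_d Y d' y z -> chain_rel_d Y d y z.
Proof.
move=> Hd Hr; have [m Hm] := cycle_gcd_exists d; have [m' Hm'] := cycle_gcd_exists d'.
have [k [c [Hc [E0 [Ek Hk]]]]] := chain_rel_dP Hm' Hr.
exists m; split=> //; exists k, c; split; first exact: is_chain_le Hc.
by do 2!split=> //; apply: dvdn_trans (cycle_gcd_dvd Hd Hm Hm') Hk.
Qed.

Lemma chain_rel_d_refl d y : Y y -> chain_rel_d Y d y y.
Proof.
move=> Yy; have [m Hm] := cycle_gcd_exists d; have [k [c [[Hc Ek] E0]]] := cycle_through d Yy.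
exists m; split=> //; exists k, c; do 3!split=> //; first by rewrite -Ek.
by case: Hm => H _; apply: H (conj Hc Ek).
Qed.

Lemma chain_rel_d_trans d x y z :
  chain_rel_d Y d x y -> chain_rel_d Y d y z -> chain_rel_d Y d x z.
Proof.
move=> H1 H2; have [m Hm] := cycle_gcd_exists d.
have [k1 [c1 [Hc1 [E10 [E1k Hk1]]]]] := chain_rel_dP Hm H1.
have [k2 [c2 [Hc2 [E20 [E2k Hk2]]]]] := chain_rel_dP Hm H2.
exists m; split=> //; exists (k1 + k2), (cat_chain c1 k1 c2).
split; first by apply: is_chain_cat; rewrite // E1k E20.
by rewrite cat_chain_end ?dvdn_add //; case: Hc2.
Qed.

Lemma chain_rel_d_sym d y z : chain_rel_d Y d y z -> chain_rel_d Y d z y.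
Proof.
move=> H; have [Yy Yz] := chain_rel_d_mem H; have [m Hm] := cycle_gcd_exists d.
have [k [c [Hc [E0 [Ek Hk]]]]] := chain_rel_dP Hm H.
have [j [c' [Hc' [E0' Ek']]]] := transitive_chain d Yz Yy.
exists m; split=> //; exists j, c'; do 3!split=> //.
have Hcyc : is_cycle Y d (k + j) (cat_chain c k c').
  split; first by apply: is_chain_cat; rewrite // Ek E0'.
  by rewrite cat_chain0 cat_chain_end ?E0 ?Ek' //; case: Hc'.
by rewrite -(dvdn_addr _ Hk); case: Hm => Hm _; apply: Hm Hcyc.
Qed.

Lemma chain_rel_mem y z : chain_rel Y y z -> Y y /\ Y z.
Proof. by move=> H; apply: chain_rel_d_mem (H 0). Qed.

Lemma chain_rel_refl y : Y y -> chain_rel Y y y.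
Proof. by move=> Yy d; apply: chain_rel_d_refl. Qed.

Lemma chain_rel_sym y z : chain_rel Y y z -> chain_rel Y z y.
Proof. by move=> H d; apply: chain_rel_d_sym. Qed.

Lemma chain_rel_trans x y z : chain_rel Y x y -> chain_rel Y y z -> chain_rel Y x z.
Proof. by move=> H1 H2 d; apply: chain_rel_d_trans (H1 d) (H2 d). Qed.

Lemma chain_rel_closed y w : Y w ->
  (forall d, exists2 w', chain_rel_d Y d y w' & agree d w' w) -> chain_rel Y y w.
Proof.
move=> Yw H d; have [w' Hr Aw] := H d; have [m Hm] := cycle_gcd_exists d.
have [k [c [[Hk [Yc Ac]] [E0 [Ek Hmk]]]]] := chain_rel_dP Hm Hr.
exists m; split=> //; exists k, (fun i => if i == k then w else c i).
split; last by rewrite eqxx ifF ?E0 //; lia.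
split=> //; split=> i Hi; first by case: ifP => // _; apply: Yc.
rewrite ifF; last lia.
case: ifP => [/eqP Ei | _]; last exact: Ac.
by apply: agree_trans (Ac _ Hi) _; rewrite Ei Ek.
Qed.

Lemma chain_rel_shift y z : chain_rel Y y z -> chain_rel Y (shift y) (shift z).
Proof.
move=> H d; have [m Hm] := cycle_gcd_exists d; have [m' Hm'] := cycle_gcd_exists d.+1.
have [k [c [[Hk [Yc Ac]] [E0 [Ek Hmk]]]]] := chain_rel_dP Hm' (H d.+1).
exists m; split=> //; exists k, (fun i => shift (c i)); split; last first.
  by rewrite E0 Ek; do 2!split=> //; apply: dvdn_trans (cycle_gcd_dvd _ Hm Hm') Hmk.
split=> //; split=> i Hi; first by apply: (SFT_shift YSFT); apply: Yc.
by apply: agree_shift; apply: Ac.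
Qed.

Lemma chain_rel_shiftn t y z : chain_rel Y y z -> chain_rel Y (shiftn t y) (shiftn t z).
Proof. by elim: t => //= t IH H; apply: chain_rel_shift; apply: IH. Qed.

(* Cycles [y -> shift y ~> shift z ~> y] and [z -> shift z ~> y ~> z] give
   [m | 1 + b] and then [m | L] for the lengths [b] of [shift z ~> y] and [L] of [y ~> z]. *)
Lemma chain_rel_unshift y z : Y y -> Y z ->
  chain_rel Y (shift y) (shift z) -> chain_rel Y y z.
Proof.
move=> Yy Yz H d; have [m Hm] := cycle_gcd_exists d.
have [a [ca [Hca [Ea0 [Eak Ha]]]]] := chain_rel_dP Hm (H d).
have [b [cb [Hcb [Eb0 Ebk]]]] := transitive_chain d (SFT_shift YSFT Yz) Yy.
have [L [cL [HcL [EL0 ELk]]]] := transitive_chain d Yy Yz.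
exists m; split=> //; exists L, cL; do 3!split=> //.
have cyc u k1 c1 k2 c2 : Y u -> is_chain Y d k1 c1 -> is_chain Y d k2 c2 ->
    c1 0 = shift u -> c1 k1 = c2 0 -> c2 k2 = u -> m %| 1 + k1 + k2.
  move=> Yu H1 H2 E1 E12 E2; case: Hm => Hm _.
  apply: (Hm _ (cat_chain (cat_chain (orbit u) 1 c1) (1 + k1) c2)); split.
    apply: is_chain_cat => //; first by apply: is_chain_cat; rewrite // ?E1; apply: orbit_chain.
    by rewrite cat_chain_end ?E12 //; case: H1.
  by rewrite !cat_chain0 cat_chain_end //; case: H2.
have D1 := cyc y _ _ _ _ Yy Hca Hcb Ea0 (etrans Eak (esym Eb0)) Ebk.
have D2 := cyc z _ _ _ _ Yz Hcb HcL Eb0 (etrans Ebk (esym EL0)) ELk.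
rewrite -addnA addnCA dvdn_addr // in D1.
by rewrite dvdn_addr in D2.
Qed.

Lemma chain_rel_unshiftn t y z : Y y -> Y z ->
  chain_rel Y (shiftn t y) (shiftn t z) -> chain_rel Y y z.
Proof.
elim: t y z => [|t IH] y z Yy Yz //= H.
by apply: IH => //; apply: chain_rel_unshift => //; apply: (SFT_shiftn YSFT).
Qed.

Lemma exists_common_period : exists2 M, 0 < M & common_period Y M.
Proof.
have [P [u [HP [Yu Eu]]]] := SFT_periodic_point YSFT Hne.
exists P => // d m [Hm _]; apply: (Hm _ (orbit u)).
by split; [apply: orbit_chain | rewrite /orbit Eu].
Qed.

Lemma chain_rel_shiftn_period M y : common_period Y M -> Y y -> chain_rel Y y (shiftn M y).
Proof.
move=> HM Yy; case: (posnP M) => [-> | M0]; first exact: chain_rel_refl.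
move=> d; have [m Hm] := cycle_gcd_exists d.
exists m; split=> //; exists M, (orbit y); split; first exact: orbit_chain.
by do 2!split=> //; apply: HM Hm.
Qed.

(* A point shadowing a cycle through [z] hits [z] one step after its predecessor. *)
Lemma shift_onto z : Y z -> exists2 x, Y x & shift x = z.
Proof.
move=> Yz; have [N HN] := SFT_shadowing YSFT.
have [L [c [Hc [_ EL]]]] := transitive_chain N Yz Yz.
have [x [Yx [_ Ex]]] := HN N L c (leqnn N) Hc.
have L0 : 0 < L by case: Hc.
exists (shiftn L.-1 x); first exact: SFT_shiftn.
by rewrite -iterS prednK // Ex EL.
Qed.

Lemma shiftn_onto t z : Y z -> exists2 x, Y x & shiftn t x = z.
Proof.
elim: t z => [|t IH] z Yz; first by exists z.
have [x Yx <-] := shift_onto Yz; have [x' Yx' <-] := IH x Yx.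
by exists x' => //; rewrite iterSr.
Qed.

Lemma chain_class_shiftn_onto t y z : Y y -> chain_rel Y (shiftn t y) z ->
  exists2 u, chain_rel Y y u & shiftn t u = z.
Proof.
move=> Yy H; have [_ Yz] := chain_rel_mem H.
have [u Yu Eu] := shiftn_onto t Yz; exists u => //.
apply: chain_rel_sym; apply: (chain_rel_unshiftn (t := t) Yu Yy).
by rewrite Eu; apply: chain_rel_sym.
Qed.

(* A chain [w0 ~> w] of length [L] together with a chain [shiftn L w0 ~> w0] closes
   the orbit segment [w0, ..., shiftn L w0] into a cycle, so [shiftn L w0 ~_d w]. *)
Lemma chain_class_index M w0 w : 0 < M -> common_period Y M -> Y w0 -> Y w ->
  exists2 j, j < M & chain_rel Y (shiftn j w0) w.
Proof.
move=> M0 HM Yw0 Yw.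
apply: (antitone_fin_index (Q := fun j d => chain_rel_d Y d (shiftn j w0) w)).
  by move=> j d d' Hd; apply: chain_rel_d_le.
move=> d; have [m Hm] := cycle_gcd_exists d.
have [L [c [Hc [E0 EL]]]] := transitive_chain d Yw0 Yw.
have L0 : 0 < L by case: Hc.
have [b [cb [Hcb [Eb0 EbL]]]] := transitive_chain d (SFT_shiftn YSFT L Yw0) Yw0.
have H1 : chain_rel_d Y d (shiftn L w0) w.
  exists m; split=> //; exists (b + L), (cat_chain cb b c); split.
    by apply: is_chain_cat; rewrite // EbL E0.
  split=> //; split; first by rewrite cat_chain_end.
  have Hcyc : is_cycle Y d (L + b) (cat_chain (orbit w0) L cb).
    split; first by apply: is_chain_cat; rewrite // ?Eb0 //; apply: orbit_chain.
    by rewrite cat_chain0 cat_chain_end ?EbL //; case: Hcb.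
  by case: Hm => Hm _; rewrite addnC; apply: Hm Hcyc.
exists (L %% M); first exact: ltn_pmod.
apply: chain_rel_d_trans H1; rewrite {2}(divn_eq L M) addnC iterD.
apply: chain_rel_shiftn; apply: chain_rel_shiftn_period => // d' m' Hm'.
by apply: dvdn_mull; apply: HM Hm'.
Qed.

(* A cycle of length [k] anywhere, conjugated by chains [z ~> c 0 ~> z] of lengths
   [a] and [b], yields cycles at [z] of lengths [a + b] and [a + k + b]. *)
Lemma cycle_dvd_from_base d z e : Y z ->
  (forall k c, is_cycle Y d k c -> c 0 = z -> e %| k) ->
  forall k c, is_cycle Y d k c -> e %| k.
Proof.
move=> Yz He k c Hc; have [[k0 [Yc _]] Ec] := Hc; have Yw := Yc 0 (leq0n _).
have [a [ca [Hca [Ea0 EaL]]]] := transitive_chain d Yz Yw.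
have [b [cb [Hcb [Eb0 EbL]]]] := transitive_chain d Yw Yz.
have b0 : 0 < b by case: Hcb.
have Cab : is_cycle Y d (a + b) (cat_chain ca a cb).
  split; first by apply: is_chain_cat; rewrite // EaL Eb0.
  by rewrite cat_chain0 cat_chain_end ?Ea0 ?EbL.
have Cakb : is_cycle Y d (a + k + b) (cat_chain (cat_chain ca a c) (a + k) cb).
  split; last by rewrite !cat_chain0 cat_chain_end ?Ea0 ?EbL.
  apply: is_chain_cat => //; first by apply: is_chain_cat => //; case: Hc.
  by rewrite cat_chain_end // -Ec Eb0.
have := He _ _ Cakb; rewrite !cat_chain0 Ea0 => /(_ erefl).
by rewrite addnAC dvdn_addr //; apply: (He _ _ Cab).
Qed.

(* The lengths of cycles at [z], with [0], form an additive monoid whose gcd divides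
   [m]; close a chain of length [L] by such a cycle of length [-L] mod [M]. *)
Lemma chain_rel_d_multiple d M y z : 0 < M -> common_period Y M ->
  chain_rel_d Y d y z -> exists k c, is_chain Y d k c /\ c 0 = y /\ c k = z /\ M %| k.
Proof.
move=> M0 HM Hr; have [m Hm] := cycle_gcd_exists d.
have [L [c [Hc [E0 [EL HmL]]]]] := chain_rel_dP Hm Hr.
have [_ Yz] := chain_rel_d_mem Hr.
pose Sz k := k = 0 \/ exists2 c, is_cycle Y d k c & c 0 = z.
have SzD a b : Sz a -> Sz b -> Sz (a + b).
  case=> [-> // | [ca Ha Ea]] [-> | [cb Hb Eb]]; rewrite ?addn0; right; first by exists ca.
  by exists (cat_chain ca a cb); [apply: is_cycle_cat; rewrite // Ea Eb | rewrite cat_chain0].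
have [h hdvd hneg] := addn_closed_neg_residues M0 (or_introl erefl) SzD.
have hm : h %| m.
  case: Hm => _; apply; apply: (cycle_dvd_from_base Yz) => k c' Hc' E'.
  by apply: hdvd; right; exists c'.
have [b [-> | [cb Hcb Ecb]] Mb] := hneg L (dvdn_trans hm HmL).
  by exists L, c.
exists (L + b), (cat_chain c L cb); have [[b0 _] Ecb'] := Hcb.
split; first by apply: (is_chain_cat Hc (proj1 Hcb)); rewrite EL Ecb.
by rewrite cat_chain_end // -Ecb' Ecb addnC.
Qed.

Lemma chain_visiting d M y (z : nat -> nat -> S) n : 0 < M -> common_period Y M ->
  (forall j, j <= n -> chain_rel_d Y d y (z j)) ->
  exists k c, is_chain Y d k c /\
    forall j, j <= n -> exists t, t <= k /\ M %| t /\ c t = z j.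
Proof.
move=> M0 HM Hz.
suff [k [c [Hc [_ [_ Hv]]]]] : exists k c, is_chain Y d k c /\ M %| k /\ c k = z n /\
    forall j, j <= n -> exists t, t <= k /\ M %| t /\ c t = z j by exists k, c.
elim: n Hz => [|n IH] Hz.
  have [_ Yz0] := chain_rel_d_mem (Hz 0 (leqnn 0)).
  have [k [c [Hc [E0 [Ek Mk]]]]] := chain_rel_d_multiple M0 HM (chain_rel_d_refl d Yz0).
  by exists k, c; do 3!split=> //; case=> // _; exists 0.
have [k1 [c1 [Hc1 [Mk1 [Ek1 V1]]]]] := IH (fun j Hj => Hz j (leqW Hj)).
have Hr12 : chain_rel_d Y d (z n) (z n.+1).
  exact: chain_rel_d_trans (chain_rel_d_sym (Hz n (leqnSn n))) (Hz n.+1 (leqnn _)).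
have [k2 [c2 [Hc2 [E20 [E2k Hk2]]]]] := chain_rel_d_multiple M0 HM Hr12.
have k20 : 0 < k2 by case: Hc2.
exists (k1 + k2), (cat_chain c1 k1 c2).
split; first by apply: is_chain_cat; rewrite // Ek1 E20.
have Mk : M %| k1 + k2 by rewrite dvdn_add.
split=> //; split; first by rewrite cat_chain_end.
move=> j; rewrite leq_eqVlt => /predU1P [-> | Hj].
  by exists (k1 + k2); rewrite cat_chain_end.
have [t [Ht [Mt Ect]]] := V1 j Hj.
by exists t; rewrite /cat_chain Ht (leq_trans Ht (leq_addr _ _)).
Qed.

End ChainClasses.

(** * Compactness *)

Definition infinitely_often (P : nat -> Prop) := forall e0, exists2 e, e0 <= e & P e.

Lemma infinitely_often_pigeonhole (S : finType) (P : nat -> Prop) (f : nat -> S) :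
  infinitely_often P -> exists s, infinitely_often (fun e => P e /\ f e = s).
Proof.
move=> HP; apply: NNPP => Hn.
have /choice [b Hb] : forall s, exists b, forall e, b <= e -> ~ (P e /\ f e = s).
  move=> s; apply: NNPP => Hs; apply: Hn; exists s => e0.
  by apply: NNPP => He; apply: Hs; exists e0 => e He0 PE; apply: He; exists e.
have [e He Pe] := HP (\max_(s : S) b s).
by apply: (Hb (f e) e) => //; apply: leq_trans (leq_bigmax (f e)) He.
Qed.

(* Koenig's lemma: the prefix of length [l + 1] extends the prefix of length [l] by
   a symbol seen infinitely often among the [w e] sharing that prefix. *)
Lemma cluster_point (S : finType) (w : nat -> nat -> S) :
  exists v, forall l, infinitely_often (fun e => agree l v (w e)).
Proof.
have /choice [pick pickP] : forall ul : (nat -> S) * nat, exists s,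
    infinitely_often (fun e => agree ul.2 ul.1 (w e)) ->
    infinitely_often (fun e => agree ul.2 ul.1 (w e) /\ w e ul.2 = s).
  case=> u l; case: (classic (infinitely_often (fun e => agree l u (w e)))) => H.
    by have [s Hs] := infinitely_often_pigeonhole (fun e => w e l) H; exists s.
  by exists (w 0 0).
pose pref := fix pref l := if l is l'.+1
  then fun i => if i < l' then pref l' i else pick (pref l', l') else w 0.
have pref_inv l : infinitely_often (fun e => agree l (pref l) (w e)).
  elim: l => [|l IH] e0; first by exists e0.
  have [e He [Ae Ee]] := pickP (pref l, l) IH e0.
  exists e => // i Hi /=; case: ifP => Hil; first exact: Ae.
  by have -> : i = l by lia.
have pref_stable l l' i : i < l -> l <= l' -> pref l' i = pref l i.
  move=> Hi; elim: l' => [|l' IH] Hl; first lia.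
  case: (ltngtP l l'.+1) => H; [ | lia | by rewrite H].
  by rewrite /= ifT ?IH //; lia.
exists (fun i => pref i.+1 i) => l e0; have [e He Ae] := pref_inv l e0.
by exists e => // i Hi; rewrite -Ae // (pref_stable i.+1 l).
Qed.

Section Compactness.
Variables (S : finType) (T : Type) (Y : pset (nat -> S)) (f : (nat -> S) -> (nat -> T)).
Hypothesis HY : is_SFT Y.
Hypothesis Hf : cont_on Y f.

Lemma uniform_continuity k :
  exists l, forall x y, Y x -> Y y -> agree l x y -> agree k (f x) (f y).
Proof.
apply: NNPP => Hn.
have /choice [xy xyP] : forall l, exists xy : (nat -> S) * (nat -> S),
    [/\ Y xy.1, Y xy.2, agree l xy.1 xy.2 & ~ agree k (f xy.1) (f xy.2)].
  move=> l; apply: NNPP => Hl; apply: Hn; exists l => x y Yx Yy Axy.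
  by apply: NNPP => Hk; apply: Hl; exists (x, y).
have [v Hv] := cluster_point (fun l => (xy l).1).
have Yv : Y v.
  by apply: (SFT_closed HY) => l; have [e _ Ae] := Hv l 0; exists (xy e).1; case: (xyP e).
have [l0 Hl0] := Hf Yv k; have [e He Ae] := Hv l0 l0.
case: (xyP e) => [Y1 Y2 A12 []].
apply: agree_trans (Hl0 _ Y2 _); first by apply: agree_sym; apply: Hl0.
exact: agree_trans Ae (agree_le He A12).
Qed.

Lemma image_closed (D : pset (nat -> S)) u :
  (forall w, D w -> Y w) ->
  (forall w, Y w -> (forall l, exists2 w', D w' & agree l w' w) -> D w) ->
  (forall e, exists w, D w /\ agree e (f w) u) -> img f D u.
Proof.
move=> DY Dcl /choice [ws wsP].
have [v Hv] := cluster_point ws.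
have Yv : Y v.
  apply: (SFT_closed HY) => l; have [e _ Ae] := Hv l 0.
  by exists (ws e); [apply: DY; case: (wsP e) |].
exists v; split.
  by apply: Dcl => // l; have [e _ Ae] := Hv l 0; exists (ws e); [case: (wsP e) | apply: agree_sym].
apply: functional_extensionality => i.
have [l0 Hl0] := Hf Yv i.+1; have [e He Ae] := Hv l0 (maxn l0 i.+1).
case: (wsP e) => De Ae'.
rewrite (Hl0 _ (DY _ De) Ae i (ltnSn i)).
by apply: Ae'; apply: leq_trans He; apply: leq_maxr.
Qed.

End Compactness.

(** * Equivariant maps and lifts of chain classes *)

Lemma cont_on_comp (S T U : Type) (A : pset (nat -> S)) (B : pset (nat -> T))
    (p : (nat -> S) -> (nat -> T)) (r : (nat -> T) -> (nat -> U)) :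
  cont_on A p -> cont_on B r -> (forall x, A x -> B (p x)) -> cont_on A (fun x => r (p x)).
Proof.
move=> Hp Hr AB x Ax k; have [l Hl] := Hr _ (AB _ Ax) k.
have [l' Hl'] := Hp _ Ax l; exists l' => y Ay Axy.
by apply: Hl; [apply: AB | apply: Hl'].
Qed.

Section EquivariantMaps.
Variables (S T : finType) (Y : pset (nat -> S)) (Z : pset (nat -> T)).
Hypotheses (HY : is_transitive_SFT Y) (HYne : exists x, Y x).
Hypotheses (HZ : is_transitive_SFT Z) (HZne : exists x, Z x).
Variable f : (nat -> S) -> (nat -> T).
Hypothesis Hf : cont_on Y f.
Hypothesis fY : forall x, Y x -> Z (f x).
Hypothesis feq : forall x, Y x -> f (shift x) = shift (f x).

Lemma map_chain l d k c :
  (forall x y, Y x -> Y y -> agree l x y -> agree d (f x) (f y)) ->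
  is_chain Y l k c -> is_chain Z d k (fun i => f (c i)).
Proof.
move=> Hu [Hk [Yc Ac]]; split=> //; split=> i Hi; first by apply: fY; apply: Yc.
have Yi : Y (c i) by apply: Yc; apply: ltnW.
by rewrite -feq //; apply: Hu; [apply: (SFT_shift (proj1 HY)) | apply: Yc | apply: Ac].
Qed.

(* For a modulus [l] of uniform continuity of [f] at precision [d], [l]-cycles of [Y]
   map to [d]-cycles of [Z], so [m(Z, d)] divides [m(Y, l)]. *)
Lemma chain_rel_map y z : chain_rel Y y z -> chain_rel Z (f y) (f z).
Proof.
move=> H d; have [l Hl] := uniform_continuity (proj1 HY) Hf d.
have [m Hm] := cycle_gcd_exists HZ HZne d; have [m' Hm'] := cycle_gcd_exists HY HYne l.
have [k [c [Hc [E0 [Ek Hk]]]]] := chain_rel_dP Hm' (H l).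
exists m; split=> //; exists k, (fun i => f (c i)); split; first exact: map_chain Hc.
rewrite E0 Ek; do 2!split=> //; apply: dvdn_trans Hk.
case: Hm' => _; apply=> k' c' [Hc' Ec'].
by case: Hm => Hm _; apply: (Hm _ (fun i => f (c' i))); split; [apply: map_chain Hc' | rewrite Ec'].
Qed.

End EquivariantMaps.

Definition psubset (T : Type) (P Q : pset T) := forall x, P x -> Q x.

Section ClassImages.
Variables (S S' : finType) (U : Type) (Y : pset (nat -> S)) (Y' : pset (nat -> S')).
Hypotheses (HY : is_transitive_SFT Y) (HYne : exists x, Y x).
Hypotheses (HY' : is_transitive_SFT Y') (HY'ne : exists x, Y' x).
Variables (f : (nat -> S) -> (nat -> U)) (g : (nat -> S') -> (nat -> U)).
Hypothesis feq : forall x, Y x -> f (shift x) = shift (f x).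
Hypothesis geq : forall x, Y' x -> g (shift x) = shift (g x).

Lemma img_class_shiftn s y y' : Y y ->
  psubset (img f (chain_rel Y y)) (img g (chain_rel Y' y')) ->
  psubset (img f (chain_rel Y (shiftn s y))) (img g (chain_rel Y' (shiftn s y'))).
Proof.
move=> Yy H _ [z [Hz <-]].
have [u Hu <-] := chain_class_shiftn_onto HY HYne Yy Hz.
have [w [Hw Ew]] := H (f u) (ex_intro _ u (conj Hu erefl)).
have [[_ Yu] [_ Yw]] := (chain_rel_mem Hu, chain_rel_mem Hw).
exists (shiftn s w); split; first exact: chain_rel_shiftn.
rewrite (equivariant_shiftn (SFT_shift (proj1 HY')) geq) // Ew.
by rewrite (equivariant_shiftn (SFT_shift (proj1 HY)) feq).
Qed.

End ClassImages.

Section Lift.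
Variables (SA SB : finType) (SC : Type).
Variables (A : pset (nat -> SA)) (B : pset (nat -> SB)).
Hypotheses (HA : is_transitive_SFT A) (HAne : exists x, A x).
Hypotheses (HB : is_transitive_SFT B) (HBne : exists x, B x).
Variables (p : (nat -> SA) -> (nat -> SB)) (r : (nat -> SB) -> (nat -> SC)).
Hypothesis Hp : cont_on A p.
Hypothesis pA : forall x, A x -> B (p x).
Hypothesis peq : forall x, A x -> p (shift x) = shift (p x).
Hypothesis Hr : cont_on B r.
Hypothesis req : forall x, B x -> r (shift x) = shift (r x).
Hypothesis r_lift : forall z, B z -> exists w, A w /\ r (p w) = r z.
Variable w0 : nat -> SA.
Hypothesis Aw0 : A w0.

Let ASFT : is_SFT A := proj1 HA.
Let BSFT : is_SFT B := proj1 HB.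

Local Notation rp := (fun w => r (p w)).

Let rpeq x : A x -> rp (shift x) = shift (rp x).
Proof. by move=> Ax; rewrite /= peq // req //; apply: pA. Qed.

Lemma uncovered_point_far y a :
  ~ psubset (img r (chain_rel B y)) (img rp (chain_rel A a)) ->
  exists z e, chain_rel B y z /\ forall w, chain_rel A a w -> ~ agree e (rp w) (r z).
Proof.
move=> Hnc; apply: NNPP => Hfar; apply: Hnc => _ [z [Hz <-]].
apply: (image_closed ASFT (cont_on_comp Hp Hr pA)) => [w Hw | w Aw Hcl | e].
- by case: (chain_rel_mem Hw).
- apply: (chain_rel_closed HA HAne Aw) => d; have [w' Hw' Aw'] := Hcl d.
  by exists w'; first apply: Hw'.
- apply: NNPP => He; apply: Hfar; exists z, e; split=> // w Hw Ae.
  by apply: He; exists w.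
Qed.

(* By contradiction: pick for each [j] a point [z j] far from the image of the class
   of [shiftn j w0]; a chain of [B] visiting every [z j], [j < M], at times divisible
   by [M] is shadowed by an orbit whose [r]-image lifts, by [r_lift], into the class
   of some [shiftn j w0], and at the time of [z j] the lift comes too close to [r (z j)]. *)
Lemma lift_class_cover_shift M : 0 < M -> common_period A M -> common_period B M ->
  exists j, psubset (img r (chain_rel B (p w0))) (img rp (chain_rel A (shiftn j w0))).
Proof.
move=> M0 HMA HMB; apply: NNPP => Hnone.
have /choice [ze zeP] : forall j, exists ze : (nat -> SB) * nat,
    chain_rel B (p w0) ze.1 /\
    forall w, chain_rel A (shiftn j w0) w -> ~ agree ze.2 (rp w) (r ze.1).
  move=> j; have [z [e He]] := uncovered_point_far (fun H => Hnone (ex_intro _ j H)).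
  by exists (z, e).
have /choice [l lP] := fun j => uniform_continuity BSFT Hr (ze j).2.
have [N HN] := SFT_shadowing BSFT.
pose d := maxn N (\max_(j < M) l j).
have [k [c [Hc Hvisit]]] :=
  chain_visiting HB HBne (n := M.-1) M0 HMB (fun j _ => (zeP j).1 d).
have [x [Bx [Ax _]]] := HN d k c (leq_maxl _ _) Hc.
have [w1 [Aw1 Ew1]] := r_lift Bx.
have [j Hj Hw1] := chain_class_index HA HAne M0 HMA Aw0 Aw1.
have jM : j <= M.-1 by rewrite -ltnS prednK.
have [t [Ht [Mt Ect]]] := Hvisit j jM.
apply: ((zeP j).2 (shiftn t w1)).
  apply: (chain_rel_trans HA HAne Hw1); apply: (chain_rel_shiftn_period HA HAne) => // d' m' Hm'.
  exact: dvdn_trans (HMA _ _ Hm') Mt.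
rewrite (equivariant_shiftn (SFT_shift ASFT) rpeq) //= Ew1.
rewrite -(equivariant_shiftn (SFT_shift BSFT) req) //= -Ect.
apply: (lP j); [exact: SFT_shiftn | by case: Hc => _ [Yc _]; apply: Yc | ].
apply: agree_le (Ax t Ht); apply: leq_trans (leqnSn _); apply: leq_trans (leq_maxr N _).
exact: (@leq_bigmax _ (fun i : 'I_M => l i) (Ordinal Hj)).
Qed.

(* Shifting the inclusion of [lift_class_cover_shift] by multiples of [j] and using
   that [shiftn (M * j)] preserves classes brings it back to the class of [w0]. *)
Lemma lift_class_cover :
  psubset (img r (chain_rel B (p w0))) (img rp (chain_rel A w0)).
Proof.
have [M M0 [HMA HMB]] : exists2 M, 0 < M & common_period A M /\ common_period B M.
  have [PA PA0 HPA] := exists_common_period HA HAne.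
  have [PB PB0 HPB] := exists_common_period HB HBne.
  exists (PA * PB); first by rewrite muln_gt0 PA0.
  by split=> d m Hm; [apply: dvdn_mulr; apply: HPA Hm | apply: dvdn_mull; apply: HPB Hm].
have [j Hj] := lift_class_cover_shift M0 HMA HMB.
have Bpw0 : B (p w0) := pA Aw0.
have step t : psubset (img r (chain_rel B (shiftn t (p w0))))
                      (img rp (chain_rel A (shiftn (t + j) w0))).
  by rewrite iterD; apply: (img_class_shiftn (s := t) HB HBne HA HAne req rpeq Bpw0 Hj).
have to_p s : psubset (img rp (chain_rel A (shiftn s w0)))
                      (img r (chain_rel B (shiftn s (p w0)))).
  move=> _ [w [Hw <-]]; exists (p w); split=> //.
  rewrite -(equivariant_shiftn (SFT_shift ASFT) peq) //.
  exact: (chain_rel_map HA HAne HB HBne Hp pA peq Hw).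
have walk t : psubset (img r (chain_rel B (p w0)))
                      (img r (chain_rel B (shiftn (t * j) (p w0)))).
  elim: t => [|t IH] y Hy //; apply: to_p; rewrite mulSn addnC; exact: step (IH y Hy).
move=> y /(walk M.-1) /step [w [Hw <-]]; exists w; split=> //.
apply: (chain_rel_trans HA HAne _ Hw); apply: (chain_rel_shiftn_period HA HAne) => // d m Hm.
by rewrite addnC -mulSn prednK // dvdn_mulr //; apply: HMA Hm.
Qed.

End Lift.

Lemma MLC1_thread (T : nat -> Type) (Z : forall n, pset (T n)) (p : forall n, T n.+1 -> T n) :
  MLC1 Z p -> (forall n, exists x, Z n x) ->
  exists th : forall n, T n, forall n, img (p n) (Z n.+1) (th n) /\ p n (th n.+1) = th n.
Proof.
move=> HMLC Hne.
have step n (x : T n) : {y : T n.+1 |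
    img (p n) (Z n.+1) x -> img (p n.+1) (Z n.+2) y /\ p n y = x}.
  apply: constructive_indefinite_description.
  case: (classic (img (p n) (Z n.+1) x)) => [Hx | Hnx].
    by have [y Hy] := (HMLC n x).1 Hx; exists y.
  by have [y _] := Hne n.+1; exists y => /Hnx.
have [v Zv] := Hne 1.
pose th := fix th n : T n :=
  if n is n'.+1 return T n then sval (step n' (th n')) else p 0 v.
have thI n : img (p n) (Z n.+1) (th n).
  by elim: n => [|n IH]; [exists v | apply: (svalP (step n (th n)) IH).1].
by exists th => n; split=> //; apply: (svalP (step n (th n)) (thI n)).2.
Qed.

Theorem lemma5p1 (S : nat -> finType) (X : forall n, pset (nat -> S n))
  (p : forall n, (nat -> S n.+1) -> (nat -> S n)) :
  (forall n, is_transitive_SFT (X n)) ->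
  (forall n, exists x, X n x) ->
  (forall n x, X n.+1 x -> X n (p n x)) ->
  (forall n, cont_on (X n.+1) (p n)) ->
  (forall n x, X n.+1 x -> p n (shift x) = shift (p n x)) ->
  MLC1 X p ->
  exists D : forall n, pset (nat -> S n),
    (forall n, is_D_class (X n) (D n)) /\
    (forall n x, D n.+1 x -> D n (p n x)) /\
    MLC1 D p.
Proof.
move=> HX Hne HpX Hcont Heq HMLC.
have [th thP] := MLC1_thread HMLC Hne.
have thX n : X n (th n) by have [[y [Xy <-]] _] := thP n; apply: HpX.
pose D n := chain_rel (X n) (th n).
have Dp n x : D n.+1 x -> D n (p n x).
  rewrite /D -(thP n).2.
  exact: (chain_rel_map (HX n.+1) (Hne n.+1) (HX n) (Hne n) (Hcont n) (@HpX n) (@Heq n)).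
have lift n z : X n.+1 z -> exists w, X n.+2 w /\ p n (p n.+1 w) = p n z.
  move=> Xz; have [_ [[w [Xw <-]] Ew]] := (HMLC n (p n z)).1 (ex_intro _ z (conj Xz erefl)).
  by exists w.
exists D; split; [ | split=> // n y; split].
- move=> n; exists (th n); split=> // z.
  by split=> [Hz | [_ Hz]] //; split=> //; case: (chain_rel_mem Hz).
- move=> [z [Hz <-]].
  have := lift_class_cover (HX n.+2) (Hne n.+2) (HX n.+1) (Hne n.+1) (Hcont n.+1)
    (@HpX n.+1) (@Heq n.+1) (Hcont n) (@Heq n) (@lift n) (thX n.+2).
  rewrite (thP n.+1).2 => /(_ (p n z) (ex_intro _ z (conj Hz erefl))) [w [Hw Ew]].
  by exists (p n.+1 w); split=> //; exists w.
- by move=> [_ [[w [Dw <-]] <-]]; exists (p n.+1 w); split=> //; apply: Dp.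
Qed.
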